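(* Let $q$ be a prime power, $n\ge 2$, $\lambda$ a nontrivial additive character of $\mathbb{F}_q$, and $x\in\mathbb{F}_q^*$. Then \[ q^{\binom n2}\sum_{\alpha_1,\ldots,\alpha_{n-1}\in\mathbb{F}_q^*}\lambda\!\left(\alpha_1+\cdots+\alpha_{n-1}+\frac{x}{\alpha_1\cdots\alpha_{n-1}}\right) = \sum_{\substack{g\in GL(n,q)\\ \det g = x}}\lambda(\operatorname{tr} g). \]
   Context: $GL(n,q)$ is the group of invertible $n\times n$ matrices over $\mathbb{F}_q$. *)

From HB Require Import structures.
From mathcomp Require Import all_boot all_order all_algebra all_field.
Set Implicit Arguments. Unset Strict Implicit. Unset Printing Implicit Defensive.
Import GRing.Theory Num.Theory.
Local Open Scope ring_scope.

Definition additive_char (F : finFieldType) (lam : F -> algC) : Prop :=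
  lam 0 = 1 /\ forall a b : F, lam (a + b) = lam a * lam b.

Definition nontrivial_char (F : finFieldType) (lam : F -> algC) : Prop :=
  exists a : F, lam a != 1.

From HB Require Import structures.
From mathcomp Require Import all_boot all_order all_algebra all_field.
Import GRing.Theory Num.Theory.
Set Implicit Arguments. Unset Strict Implicit. Unset Printing Implicit Defensive.
Local Open Scope ring_scope.

(* Put T_n(f) := sum over g in M_n(F_q) of f(det g) lam(tr g), for an arbitrary
   weight f. Split g into blocks of sizes 1 and n. If the upper-right row is
   nonzero, a suitable shear of the lower block row fixes det g and shifts tr g
   by some a with lam(a) <> 1, so these g contribute nothing; the block lower
   triangular g give T_(n+1)(f) = q^n sum_a lam(a) T_n(f(a .)). For f the
   indicator of det = x this is, up to the factor q^n, the recursion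
   Kl_(m+1)(x) = sum_(b <> 0) lam(b) Kl_m(x/b) of the hyper-Kloosterman sums,
   and the factors q^n accumulate to q^C(n,2). *)

Lemma big_col_mx (V : nmodType) (T : finType) m1 m2 n (G : 'M[T]_(m1 + m2, n) -> V) :
  \sum_A G A = \sum_u \sum_d G (col_mx u d).
Proof.
rewrite pair_big (reindex (fun p => col_mx p.1 p.2)) //.
exists (fun A => (usubmx A, dsubmx A)) => [[u d] _ | A _] /=.
  by rewrite col_mxKu col_mxKd.
exact: vsubmxK.
Qed.

Lemma big_row_mx (V : nmodType) (T : finType) m n1 n2 (G : 'M[T]_(m, n1 + n2) -> V) :
  \sum_A G A = \sum_l \sum_r G (row_mx l r).
Proof.
rewrite pair_big (reindex (fun p => row_mx p.1 p.2)) //.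
exists (fun A => (lsubmx A, rsubmx A)) => [[l r] _ | A _] /=.
  by rewrite row_mxKl row_mxKr.
exact: hsubmxK.
Qed.

Lemma big_block_mx (V : nmodType) (T : finType) m1 m2 n1 n2
    (G : 'M[T]_(m1 + m2, n1 + n2) -> V) :
  \sum_A G A = \sum_ul \sum_ur \sum_dl \sum_dr G (block_mx ul ur dl dr).
Proof.
rewrite big_col_mx big_row_mx; apply: eq_bigr => ul _; apply: eq_bigr => ur _.
exact: big_row_mx.
Qed.

Lemma mxtrace_delta_mul (R : comPzRingType) m n (i : 'I_m) (j : 'I_n) (A : 'M[R]_(m, n)) :
  \tr (delta_mx j i *m A) = A i j.
Proof.
rewrite -(mul_delta_mx (0 : 'I_1) j i) -mulmxA -rowE mxtrace_mulC -colE.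
by rewrite /mxtrace big_ord1 !mxE.
Qed.

Definition ffun_cons (T : Type) m (b : T) (f : {ffun 'I_m -> T}) : {ffun 'I_m.+1 -> T} :=
  [ffun i => if unlift ord0 i is Some j then f j else b].

Lemma ffun_cons0 (T : Type) m (b : T) (f : {ffun 'I_m -> T}) : ffun_cons b f ord0 = b.
Proof. by rewrite ffunE unlift_none. Qed.

Lemma ffun_cons_lift (T : Type) m (b : T) (f : {ffun 'I_m -> T}) j :
  ffun_cons b f (lift ord0 j) = f j.
Proof. by rewrite ffunE liftK. Qed.

Lemma big_ffun_cons (V : nmodType) (T : finType) m (P : pred {ffun 'I_m.+1 -> T})
    (G : {ffun 'I_m.+1 -> T} -> V) :
  \sum_(a | P a) G a = \sum_b \sum_(f | P (ffun_cons b f)) G (ffun_cons b f).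
Proof.
rewrite pair_big_dep (reindex (fun p => ffun_cons p.1 p.2)) //=.
exists (fun a => (a ord0, [ffun j => a (lift ord0 j)])) => [[b f] _ | a _] /=.
  by rewrite ffun_cons0; congr pair; apply/ffunP => j; rewrite ffunE ffun_cons_lift.
by apply/ffunP => i; rewrite ffunE; case: unliftP => [j ->|->] //; rewrite ffunE.
Qed.

Lemma big_ord_ffun_cons (R : Type) (idx : R) (op : Monoid.law idx) m (b : R)
    (f : {ffun 'I_m -> R}) :
  \big[op/idx]_(i < m.+1) ffun_cons b f i = op b (\big[op/idx]_(j < m) f j).
Proof.
by rewrite big_ord_recl ffun_cons0; under eq_bigr do rewrite ffun_cons_lift.
Qed.

Section TraceCharacterSums.

Variables (F : finFieldType) (lam : F -> algC).
Hypothesis lam_char : additive_char lam.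
Hypothesis lam_nontrivial : nontrivial_char lam.

Lemma lamD a b : lam (a + b) = lam a * lam b.
Proof. by case: lam_char. Qed.

Lemma sum_lower_blocks_eq0 m n (ul : 'M[F]_m) (ur : 'M[F]_(m, n)) (f : F -> algC) :
  ur != 0 ->
  \sum_dl \sum_dr f (\det (block_mx ul ur dl dr)) * lam (\tr (block_mx ul ur dl dr)) = 0.
Proof.
move: lam_nontrivial => [a a_nontriv] ur_neq0.
have /existsP[i /existsP[j urij_neq0]] : [exists i, exists j, ur i j != 0].
  apply: contraR ur_neq0 => /existsPn ur0; apply/eqP/matrixP => i j.
  by rewrite mxE; move/existsPn: (ur0 i) => /(_ j)/negPn/eqP.
(* Adding C times the top block row to the bottom one shifts the trace by a. *)
set C : 'M[F]_(n, m) := (a / ur i j) *: delta_mx j i.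
have trC : \tr (C *m ur) = a by rewrite -scalemxAl mxtraceZ mxtrace_delta_mul divfK.
rewrite pair_big /=; set S := (X in X = 0).
have S_inv : S = lam a * S.
  rewrite {1}/S (reindex_inj (h := fun p => (p.1 + C *m ul, p.2 + C *m ur))); last first.
    by move=> [? ?] [? ?] /= [/addIr -> /addIr ->].
  rewrite mulr_sumr; apply: eq_bigr => [[dl dr] _] /=.
  have shearE : block_mx ul ur (dl + C *m ul) (dr + C *m ur) =
      block_mx 1%:M 0 C 1%:M *m block_mx ul ur dl dr.
    by rewrite mulmx_block !mul1mx !mul0mx !addr0 ![_ + C *m _]addrC.
  rewrite {1}shearE det_mulmx det_lblock !det1 !mul1r mulrCA; congr (_ * _).
  by rewrite !mxtrace_block mxtraceD trC addrA lamD mulrC.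
have : (1 - lam a) * S = 0 by rewrite mulrBl mul1r -S_inv subrr.
by move/eqP; rewrite mulf_eq0 subr_eq0 eq_sym (negbTE a_nontriv) => /eqP.
Qed.

Definition trace_char_sum n (f : F -> algC) :=
  \sum_(g : 'M[F]_n) f (\det g) * lam (\tr g).

Lemma eq_trace_char_sum n f f' : f =1 f' -> trace_char_sum n f = trace_char_sum n f'.
Proof. by move=> eq_f; apply: eq_bigr => g _; rewrite eq_f. Qed.

Lemma trace_char_sum0 f : trace_char_sum 0 f = f 1.
Proof.
rewrite /trace_char_sum (big_pred1 1%:M) => [|g]; last first.
  by rewrite /= [g]flatmx0 [1%:M]flatmx0 eqxx.
by rewrite det1 mxtrace1; case: lam_char => -> _; rewrite mulr1.
Qed.

Lemma trace_char_sumS n f :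
  trace_char_sum n.+1 f =
    (#|F| ^ n)%:R * \sum_a lam a * trace_char_sum n (fun d => f (a * d)).
Proof.
rewrite /trace_char_sum (@big_block_mx _ _ 1 n 1 n).
have lower_triangular (ul : 'M[F]_1) :
    \sum_(ur : 'M[F]_(1, n)) \sum_(dl : 'M[F]_(n, 1)) \sum_(dr : 'M[F]_n)
    f (\det (block_mx ul ur dl dr)) * lam (\tr (block_mx ul ur dl dr)) =
    (\sum_(dr : 'M[F]_n) f (\det ul * \det dr) * lam (\tr ul + \tr dr)) *+ #|F| ^ n.
  rewrite (bigD1 0) //= [X in _ + X]big1 ?addr0 => [|ur /sum_lower_blocks_eq0 //].
  have -> : (#|F| ^ n)%N = #|{: 'M[F]_(n, 1)}| by rewrite card_mx muln1.
  rewrite -sumr_const; apply: eq_big => // dl _; apply: eq_bigr => dr _.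
  by rewrite det_lblock mxtrace_block.
rewrite (eq_bigr _ (fun ul _ => lower_triangular ul)) sumrMnl mulr_natl.
rewrite (reindex (fun a : F => a%:M)) /=; last first.
  exists (fun A : 'M_1 => A 0 0) => [a _ | A _]; first by rewrite mxE eqxx.
  by apply/matrixP => i j; rewrite !ord1 mxE eqxx.
congr (_ *+ _); apply: eq_bigr => a _; rewrite mulr_sumr; apply: eq_bigr => g _.
by rewrite det_scalar1 mxtrace_scalar lamD mulrCA.
Qed.

Lemma sum_det_eq_trace_char_sum n y :
  \sum_(g : 'M[F]_n | \det g == y) lam (\tr g) = trace_char_sum n (fun d => (d == y)%:R).
Proof. by rewrite big_mkcond; apply: eq_bigr => g _; rewrite mulr_natl mulrb. Qed.

Definition kloosterman m (y : F) :=
  \sum_(a : {ffun 'I_m -> F} | [forall i, a i != 0])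
     lam (\sum_(i < m) a i + y / \prod_(i < m) a i).

Lemma kloosterman0 y : kloosterman 0 y = lam y.
Proof.
rewrite /kloosterman (big_pred1 [ffun=> 0]) => [|a]; first by rewrite !big_ord0 add0r divr1.
have -> : [forall i, a i != 0] by apply/forallP => -[].
by apply/esym/eqP/ffunP => -[].
Qed.

Lemma kloostermanS m y :
  kloosterman m.+1 y = \sum_(b | b != 0) lam b * kloosterman m (y / b).
Proof.
rewrite /kloosterman big_ffun_cons (bigID (fun b => b != 0)) /=.
rewrite [X in _ + X]big1 ?addr0 => [|b]; last first.
  rewrite negbK => /eqP-> /=; apply: big_pred0 => f.
  by apply/negbTE/forallP => /(_ ord0); rewrite ffun_cons0 eqxx.
apply: eq_bigr => b b_neq0; rewrite mulr_sumr; apply: eq_big => [f | f _].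
  apply/forallP/forallP => [nz_cons j | nz_f i].
    by move: (nz_cons (lift ord0 j)); rewrite ffun_cons_lift.
  by case: (unliftP ord0 i) => [j ->|->]; rewrite ?ffun_cons_lift ?ffun_cons0.
by rewrite !big_ord_ffun_cons -addrA lamD invfM mulrA.
Qed.

Lemma trace_char_sum_kloosterman m y : y != 0 ->
  trace_char_sum m.+1 (fun d => (d == y)%:R) = (#|F| ^ 'C(m.+1, 2))%:R * kloosterman m y.
Proof.
elim: m y => [|m IH] y y_neq0.
  rewrite trace_char_sumS kloosterman0 bin_small // expn0 !mul1r.
  under eq_bigr do rewrite trace_char_sum0 !mulr1 mulr_natr mulrb.
  by rewrite -big_mkcond big_pred1_eq.
rewrite trace_char_sumS kloostermanS (bigID (fun a => a != 0)) /=.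
rewrite [X in _ + X]big1 ?addr0 => [|a]; last first.
  rewrite negbK => /eqP->; rewrite [trace_char_sum _ _]big1 ?mulr0 // => g _.
  by rewrite mul0r eq_sym (negbTE y_neq0) mul0r.
rewrite binS bin1 expnD natrM -mulrA mulrCA; congr (_ * _).
rewrite mulr_sumr; apply: eq_bigr => a a_neq0.
rewrite (@eq_trace_char_sum _ _ (fun d => (d == y / a)%:R)) => [|d]; last first.
  by rewrite -[d == _](inj_eq (mulfI a_neq0)) [a * (y / a)]mulrC divfK.
by rewrite IH ?mulf_neq0 ?invr_eq0 // mulrCA.
Qed.

End TraceCharacterSums.

Theorem mainTheorem5 (F : finFieldType) (n : nat) (lam : F -> algC) (x : F) :
  (2 <= n)%N -> additive_char lam -> nontrivial_char lam -> x != 0 ->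
  ((#|F| ^ 'C(n, 2))%N)%:R *
    \sum_(a : {ffun 'I_n.-1 -> F} | [forall i, a i != 0])
       lam (\sum_(i < n.-1) a i + x / \prod_(i < n.-1) a i)
  = \sum_(g : 'M[F]_n | \det g == x) lam (\tr g).
Proof.
case: n => [|[|m]] // _ lam_char lam_nontrivial x_neq0.
by rewrite sum_det_eq_trace_char_sum trace_char_sum_kloosterman.
Qed.
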